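(* Let $a>0$, $b>0$, $G_\beta(x,y)=\left(y,-x+\frac{y}{\beta+y^2}\right)$ for $\beta>0$, and $G_{b,a}=G_b\circ G_a$. Then $G_{b,a}$ has points of (minimal) period $2$ if and only if $0<ab<1/16$. Moreover, in that case the set of points of period $2$ is the level set $\{V_{b,a}(x,y)=-ab\}$, which consists of two ovals, where $V_{b,a}(x,y)=ax^2+by^2-xy+x^2y^2$. *)

From Stdlib Require Import Reals.
Open Scope R_scope.

Definition G (beta : R) (p : R * R) : R * R :=
  (snd p, - fst p + snd p / (beta + (snd p) ^ 2)).

Definition Gba (b a : R) (p : R * R) : R * R := G b (G a p).

Definition period2 (b a : R) (p : R * R) : Prop :=
  Gba b a (Gba b a p) = p /\ Gba b a p <> p.

Definition V (b a : R) (x y : R) : R :=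
  a * x ^ 2 + b * y ^ 2 - x * y + x ^ 2 * y ^ 2.

(* An oval: a simple closed curve in R^2, i.e. the image of a continuous
   1-periodic map R -> R^2 that is injective on [0,1). *)
Definition oval (C : R -> R -> Prop) : Prop :=
  exists fx fy : R -> R,
    (forall t, continuity_pt fx t /\ continuity_pt fy t) /\
    (forall t, fx (t + 1) = fx t /\ fy (t + 1) = fy t) /\
    (forall s t, 0 <= s < 1 -> 0 <= t < 1 -> fx s = fx t -> fy s = fy t -> s = t) /\
    (forall x y, C x y <-> exists t, fx t = x /\ fy t = y).

From Stdlib Require Import Reals Lra Psatz.
From Coquelicot Require Import Coquelicot.
Open Scope R_scope.

(* Since V_{b,a}(x,y) + ab = (x^2+b)(y^2+a) - xy, the level set {V = -ab} is the
   curve (x^2+b)(y^2+a) = xy.  On it G_{b,a}(x,y) = (b/x, a/y), an involution of the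
   curve, so its points have period 1 or 2; conversely both coordinates of the
   2-periodicity equations have the form u/(β+u^2) = v/(β+v^2), which forces a
   2-periodic point onto the curve.  A point of the curve is fixed iff x^2 = b and
   y^2 = a, which happens only when ab = 1/16, and the identity
   ((X+b)(Y+a))^2 - 16abXY = 4bX(Y-a)^2 + 4aY(X-b)^2 + (X-b)^2(Y-a)^2  (X = x^2, Y = y^2)
   shows that the curve has no other points unless ab < 1/16.  In that case, viewing
   the curve as a quadratic equation in y, its branch x > 0 lies over an interval
   [c - k, c + k] and is parametrized by an angle θ with x = c + k cos θ, the sign of
   sin θ choosing the root y; the branch x < 0 is its image under (x,y) |-> (-x,-y). *)

Definition curve (a b x y : R) : Prop := (x ^ 2 + b) * (y ^ 2 + a) = x * y.

Lemma V_level_iff_curve a b x y : V b a x y = - (a * b) <-> curve a b x y.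
Proof. unfold V, curve; split; intros; nra. Qed.

Lemma curve_opp a b x y : curve a b (- x) (- y) <-> curve a b x y.
Proof. unfold curve; split; intros h; nra. Qed.

Lemma curve_sym a b x y : curve a b x y <-> curve b a y x.
Proof. unfold curve; split; intros h; nra. Qed.

Lemma curve_xy_pos a b x y : 0 < a -> 0 < b -> curve a b x y -> 0 < x * y.
Proof. unfold curve; intros ha hb <-; nra. Qed.

Lemma curve_iff_frac a b x y : 0 < b -> y <> 0 ->
  curve a b x y <-> x / (b + x ^ 2) = y + a / y.
Proof.
  intros hb hy; unfold curve.
  assert (hq : 0 < b + x ^ 2) by nra.
  split; intros h.
  - field_simplify_eq; [nra | lra].
  - field_simplify_eq in h; [nra | lra].
Qed.

Lemma frac_sq_eq k u v : 0 < k -> u / (k + u ^ 2) = v / (k + v ^ 2) -> u = v \/ u * v = k.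
Proof.
  intros hk h.
  assert (hu : 0 < k + u ^ 2) by nra. assert (hv : 0 < k + v ^ 2) by nra.
  assert (e : (u - v) * (k - u * v) = 0).
  { apply (Rmult_eq_compat_r ((k + u ^ 2) * (k + v ^ 2))) in h.
    field_simplify in h; [nra | lra | lra]. }
  destruct (Rmult_integral _ _ e); [left | right]; lra.
Qed.

Lemma Gba_curve a b x y : 0 < a -> 0 < b -> curve a b x y ->
  Gba b a (x, y) = (b / x, a / y).
Proof.
  intros ha hb h.
  assert (hxy := curve_xy_pos _ _ _ _ ha hb h).
  assert (hx : x <> 0) by (intros ->; lra).
  assert (hy : y <> 0) by (intros ->; lra).
  assert (ex : - x + y / (a + y ^ 2) = b / x).
  { apply curve_sym, (curve_iff_frac _ _ _ _ ha hx) in h; rewrite h; field; exact hx. }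
  unfold Gba, G; cbn [fst snd]; rewrite ex; f_equal.
  replace (b / x / (b + (b / x) ^ 2)) with (x / (b + x ^ 2)) by (field; split; nra).
  apply (curve_iff_frac _ _ _ _ hb hy) in h; rewrite h; field; exact hy.
Qed.

Lemma curve_inv a b x y : 0 < a -> 0 < b -> curve a b x y -> curve a b (b / x) (a / y).
Proof.
  intros ha hb h.
  assert (hxy := curve_xy_pos _ _ _ _ ha hb h).
  assert (hx : x <> 0) by (intros ->; lra).
  assert (hy : y <> 0) by (intros ->; lra).
  unfold curve in *.
  replace (((b / x) ^ 2 + b) * ((a / y) ^ 2 + a))
    with (a * b * ((x ^ 2 + b) * (y ^ 2 + a)) / (x * y) ^ 2) by (field; auto).
  rewrite h; field; auto.
Qed.

Lemma period2_curve a b x y : 0 < a -> 0 < b -> period2 b a (x, y) -> curve a b x y.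
Proof.
  intros ha hb [Hback Hne].
  remember (- x + y / (a + y ^ 2)) as x1 eqn:Ex1.
  remember (- y + x1 / (b + x1 ^ 2)) as y1 eqn:Ey1.
  assert (E : Gba b a (x, y) = (x1, y1)) by (subst; reflexivity).
  rewrite E in Hback, Hne; unfold Gba, G in Hback.
  assert (ex := f_equal fst Hback); assert (ey := f_equal snd Hback).
  cbn [fst snd] in ex, ey; rewrite ex in ey.
  assert (fy : y / (a + y ^ 2) = y1 / (a + y1 ^ 2)) by lra.
  assert (fx : x1 / (b + x1 ^ 2) = x / (b + x ^ 2)) by lra.
  destruct (frac_sq_eq _ _ _ hb fx) as [<- | hbx].
  - destruct (frac_sq_eq _ _ _ ha fy) as [<- | hay]; [now destruct Hne |].
    assert (hy : y <> 0) by (intros ->; lra).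
    apply (curve_iff_frac _ _ _ _ hb hy).
    replace (a / y) with y1 by (field_simplify_eq; lra); lra.
  - assert (hx : x <> 0) by (intros ->; lra).
    apply curve_sym, (curve_iff_frac _ _ _ _ ha hx).
    replace (b / x) with x1 by (field_simplify_eq; lra); lra.
Qed.

Lemma period2_iff a b x y : 0 < a -> 0 < b ->
  period2 b a (x, y) <-> curve a b x y /\ ~ (x ^ 2 = b /\ y ^ 2 = a).
Proof.
  intros ha hb; split.
  - intros Hp; assert (h := period2_curve _ _ _ _ ha hb Hp); split; [exact h |].
    intros [ex ey]; apply (proj2 Hp); rewrite Gba_curve by assumption.
    f_equal; [rewrite <- ex | rewrite <- ey]; field; intros ->; lra.
  - intros [h Hnf].
    assert (hxy := curve_xy_pos _ _ _ _ ha hb h).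
    assert (hx : x <> 0) by (intros ->; lra).
    assert (hy : y <> 0) by (intros ->; lra).
    split; rewrite Gba_curve by assumption.
    + rewrite Gba_curve by (try apply curve_inv; assumption).
      f_equal; field; split; lra.
    + intros e; injection e as ex ey; apply Hnf; split.
      * transitivity (x * (b / x)); [rewrite ex; ring | field; exact hx].
      * transitivity (y * (a / y)); [rewrite ey; ring | field; exact hy].
Qed.

Lemma curve_fixed_ab a b x y : 0 < a -> 0 < b -> curve a b x y ->
  x ^ 2 = b -> y ^ 2 = a -> a * b = 1 / 16.
Proof.
  unfold curve; intros ha hb h ex ey.
  rewrite ex, ey in h.
  assert (e : a * b * (16 * (a * b) - 1) = 0) by nra.
  destruct (Rmult_integral _ _ e); nra.
Qed.

Lemma weighted_sq_sum_pos (p q u v : R) : 0 < p -> 0 < q -> ~ (u = 0 /\ v = 0) ->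
  0 < p * v ^ 2 + q * u ^ 2 + u ^ 2 * v ^ 2.
Proof.
  intros hp hq huv.
  assert (0 <= u ^ 2 * v ^ 2) by (rewrite <- Rpow_mult_distr; apply pow2_ge_0).
  destruct (Req_dec u 0) as [-> | hu].
  - assert (hv : v <> 0) by tauto.
    assert (0 < v ^ 2) by (rewrite <- Rsqr_pow2; apply Rsqr_pos_lt, hv). nra.
  - assert (0 < u ^ 2) by (rewrite <- Rsqr_pow2; apply Rsqr_pos_lt, hu). nra.
Qed.

Lemma curve_ab_lt a b x y : 0 < a -> 0 < b -> curve a b x y ->
  ~ (x ^ 2 = b /\ y ^ 2 = a) -> a * b < 1 / 16.
Proof.
  intros ha hb h Hnf.
  assert (hxy := curve_xy_pos _ _ _ _ ha hb h).
  (* (X + b)^2 = (X - b)^2 + 4 b X, and likewise for Y = y^2. *)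
  assert (E : ((x ^ 2 + b) * (y ^ 2 + a)) ^ 2 - 16 * (a * b) * (x * y) ^ 2 =
              4 * b * x ^ 2 * (y ^ 2 - a) ^ 2 + 4 * a * y ^ 2 * (x ^ 2 - b) ^ 2
              + (x ^ 2 - b) ^ 2 * (y ^ 2 - a) ^ 2)
    by ring.
  unfold curve in h; rewrite h in E.
  assert (hx2 : 0 < x ^ 2) by nra; assert (hy2 : 0 < y ^ 2) by nra.
  assert (hpos : 0 < (x * y) ^ 2 - 16 * (a * b) * (x * y) ^ 2).
  { rewrite E; apply weighted_sq_sum_pos; [nra | nra |].
    intros [ex ey]; apply Hnf; split; lra. }
  nra.
Qed.

Lemma period2_iff_curve a b x y : 0 < a -> 0 < b -> a * b <> 1 / 16 ->
  period2 b a (x, y) <-> curve a b x y.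
Proof.
  intros ha hb hab; rewrite period2_iff by assumption.
  split; [tauto | intros h; split; [exact h |]].
  intros [ex ey]; exact (hab (curve_fixed_ab _ _ _ _ ha hb h ex ey)).
Qed.

Lemma curve_iff_disc a b x y : 0 < x ^ 2 + b ->
  curve a b x y <-> (2 * (x ^ 2 + b) * y - x) ^ 2 = x ^ 2 - 4 * a * (x ^ 2 + b) ^ 2.
Proof. intros hq; unfold curve; split; intros h; nra. Qed.

Lemma unit_circle_angle (co si : R) : co ^ 2 + si ^ 2 = 1 ->
  exists th, cos th = co /\ sin th = si.
Proof.
  intros h.
  assert (hco : -1 <= co <= 1) by (split; nra).
  assert (hs : sqrt (1 - co²) = Rabs si).
  { rewrite <- sqrt_Rsqr_abs; f_equal; unfold Rsqr; simpl in h; lra. }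
  destruct (Rle_dec 0 si) as [p | p].
  - exists (acos co); rewrite cos_acos, sin_acos, hs, Rabs_pos_eq by lra; auto.
  - exists (- acos co); rewrite cos_neg, sin_neg, cos_acos, sin_acos, hs, Rabs_left by lra.
    split; [reflexivity | ring].
Qed.

Lemma cos_sin_inj_0_2PI u v : 0 <= u < 2 * PI -> 0 <= v < 2 * PI ->
  cos u = cos v -> sin u = sin v -> u = v.
Proof.
  intros hu hv hc hs.
  assert (h1 : cos (u - v) = 1).
  { rewrite cos_minus, hc, hs; pose proof (sin2_cos2 v); unfold Rsqr in *; lra. }
  replace (u - v) with (2 * ((u - v) / 2)) in h1 by field.
  rewrite cos_2a_sin in h1.
  assert (h2 : sin ((u - v) / 2) = 0) by nra.
  destruct (Rtotal_order ((u - v) / 2) 0) as [l | [e | g]].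
  - assert (sin ((u - v) / 2) < 0) by (apply sin_lt_0_var; lra); lra.
  - lra.
  - assert (0 < sin ((u - v) / 2)) by (apply sin_gt_0; lra); lra.
Qed.

Section Oval.

Variables a b : R.
Hypotheses (ha : 0 < a) (hb : 0 < b) (hab : a * b < 1 / 16).

Definition center : R := 1 / (4 * sqrt a).
Definition radius : R := sqrt (1 - 16 * (a * b)) / (4 * sqrt a).
Definition cofactor (x : R) : R := 2 * sqrt a * (x + 2 * sqrt a * (x ^ 2 + b)).

Lemma sqrt_a_pos : 0 < sqrt a.
Proof. apply sqrt_lt_R0, ha. Qed.

Lemma radius_pos : 0 < radius.
Proof.
  assert (0 < sqrt (1 - 16 * (a * b))) by (apply sqrt_lt_R0; lra).
  assert (hs := sqrt_a_pos); unfold radius; apply Rdiv_lt_0_compat; lra.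
Qed.

Lemma radius_lt_center : radius < center.
Proof.
  assert (hs := sqrt_a_pos).
  assert (hd : sqrt (1 - 16 * (a * b)) < sqrt 1) by (apply sqrt_lt_1_alt; nra).
  rewrite sqrt_1 in hd.
  unfold radius, center; apply Rmult_lt_compat_r; [apply Rinv_0_lt_compat |]; lra.
Qed.

Lemma disc_factorization x :
  x ^ 2 - 4 * a * (x ^ 2 + b) ^ 2 = (radius ^ 2 - (x - center) ^ 2) * cofactor x.
Proof.
  assert (hs := sqrt_a_pos).
  assert (hs2 : sqrt a ^ 2 = a) by (rewrite <- Rsqr_pow2; apply Rsqr_sqrt; lra).
  assert (hd2 : sqrt (1 - 16 * (a * b)) ^ 2 = 1 - 16 * (a * b))
    by (rewrite <- Rsqr_pow2; apply Rsqr_sqrt; lra).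
  unfold radius, center, cofactor.
  set (s := sqrt a) in *; set (d := sqrt (1 - 16 * (a * b))) in *.
  field_simplify_eq; [| lra].
  rewrite hd2, <- hs2; ring.
Qed.

Lemma cofactor_pos x : 0 < x -> 0 < cofactor x.
Proof. intros hx; assert (hs := sqrt_a_pos); unfold cofactor; nra. Qed.

Definition oval_x (t : R) : R := center + radius * cos (2 * PI * t).
Definition oval_y (t : R) : R :=
  (oval_x t + radius * sin (2 * PI * t) * sqrt (cofactor (oval_x t)))
  / (2 * (oval_x t ^ 2 + b)).

Lemma oval_x_pos t : 0 < oval_x t.
Proof.
  assert (hr := radius_pos); assert (hrc := radius_lt_center).
  pose proof (COS_bound (2 * PI * t)); unfold oval_x; nra.
Qed.

Lemma oval_on_curve t : curve a b (oval_x t) (oval_y t).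
Proof.
  assert (hx := oval_x_pos t); assert (hc := cofactor_pos _ hx).
  assert (hq : 0 < oval_x t ^ 2 + b) by nra.
  apply curve_iff_disc; [exact hq |].
  unfold oval_y; set (x := oval_x t) in *.
  replace (2 * (x ^ 2 + b) * ((x + radius * sin (2 * PI * t) * sqrt (cofactor x))
             / (2 * (x ^ 2 + b))) - x)
    with (radius * sin (2 * PI * t) * sqrt (cofactor x)) by (field; lra).
  rewrite disc_factorization.
  assert (hxc : x - center = radius * cos (2 * PI * t)) by (unfold x, oval_x; ring).
  assert (hsq : sqrt (cofactor x) ^ 2 = cofactor x)
    by (rewrite <- Rsqr_pow2; apply Rsqr_sqrt; lra).
  pose proof (sin2_cos2 (2 * PI * t)) as hsc; unfold Rsqr in hsc.
  set (q := sqrt (cofactor x)) in *; set (sn := sin (2 * PI * t)) in *.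
  set (cs := cos (2 * PI * t)) in *.
  rewrite hxc, <- hsq.
  transitivity (radius ^ 2 * q ^ 2 * (sn * sn)); [ring |].
  replace (sn * sn) with (1 - cs * cs) by lra; ring.
Qed.

Lemma curve_oval_param x y : curve a b x y -> 0 < x ->
  exists t, oval_x t = x /\ oval_y t = y.
Proof.
  intros h hx.
  assert (hq : 0 < x ^ 2 + b) by nra.
  assert (hr := radius_pos); assert (hc := cofactor_pos _ hx).
  assert (hsq : 0 < sqrt (cofactor x)) by (apply sqrt_lt_R0; lra).
  assert (hsq2 : sqrt (cofactor x) ^ 2 = cofactor x)
    by (rewrite <- Rsqr_pow2; apply Rsqr_sqrt; lra).
  apply (curve_iff_disc _ _ _ _ hq) in h; rewrite disc_factorization in h.
  set (co := (x - center) / radius).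
  set (si := (2 * (x ^ 2 + b) * y - x) / (radius * sqrt (cofactor x))).
  destruct (unit_circle_angle co si) as [th [hcos hsin]].
  { unfold co, si.
    replace (((2 * (x ^ 2 + b) * y - x) / (radius * sqrt (cofactor x))) ^ 2)
      with ((2 * (x ^ 2 + b) * y - x) ^ 2 / (radius ^ 2 * sqrt (cofactor x) ^ 2))
      by (field; lra).
    rewrite h, hsq2; field; lra. }
  assert (hpi := PI_RGT_0).
  assert (hth : 2 * PI * (th / (2 * PI)) = th) by (field; lra).
  exists (th / (2 * PI)).
  assert (hX : oval_x (th / (2 * PI)) = x)
    by (unfold oval_x; rewrite hth, hcos; unfold co; field; lra).
  split; [exact hX |].
  unfold oval_y; rewrite hX, hth, hsin; unfold si; field; lra.
Qed.

Lemma oval_param_inj s t : 0 <= s < 1 -> 0 <= t < 1 ->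
  oval_x s = oval_x t -> oval_y s = oval_y t -> s = t.
Proof.
  intros hs ht ex ey.
  assert (hr := radius_pos); assert (hpi := PI_RGT_0).
  assert (hx := oval_x_pos t); assert (hc := cofactor_pos _ hx).
  assert (hsq : 0 < sqrt (cofactor (oval_x t))) by (apply sqrt_lt_R0; lra).
  assert (hcos : cos (2 * PI * s) = cos (2 * PI * t)).
  { unfold oval_x in ex; apply (Rmult_eq_reg_l radius); lra. }
  assert (hsin : sin (2 * PI * s) = sin (2 * PI * t)).
  { unfold oval_y in ey; rewrite ex in ey; unfold Rdiv in ey.
    apply Rmult_eq_reg_r in ey; [| apply Rinv_neq_0_compat; nra].
    apply (Rmult_eq_reg_l (radius * sqrt (cofactor (oval_x t)))); nra. }
  apply (Rmult_eq_reg_l (2 * PI)); [| lra].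
  apply cos_sin_inj_0_2PI; auto; nra.
Qed.

Lemma oval_periodic t : oval_x (t + 1) = oval_x t /\ oval_y (t + 1) = oval_y t.
Proof.
  assert (e : 2 * PI * (t + 1) = 2 * PI * t + 2 * INR 1 * PI) by (simpl; ring).
  assert (hX : oval_x (t + 1) = oval_x t) by (unfold oval_x; rewrite e, cos_period; auto).
  split; [exact hX |].
  unfold oval_y; rewrite hX, e, sin_period; reflexivity.
Qed.

Lemma oval_continuous t : continuity_pt oval_x t /\ continuity_pt oval_y t.
Proof.
  assert (hx := oval_x_pos t); assert (hc := cofactor_pos _ hx).
  split; apply continuity_pt_filterlim.
  - apply (ex_derive_continuous oval_x); unfold oval_x; auto_derive; auto.
  - apply (ex_derive_continuous oval_y); unfold oval_y, oval_x, cofactor in *; auto_derive.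
    set (X := center + radius * cos (2 * PI * t)) in *.
    replace (X * (X * 1)) with (X ^ 2) by ring.
    repeat split; [lra | nra].
Qed.

Lemma oval_image_iff x y :
  (exists t, oval_x t = x /\ oval_y t = y) <-> curve a b x y /\ 0 < x.
Proof.
  split.
  - intros [t [<- <-]]; split; [apply oval_on_curve | apply oval_x_pos].
  - intros [h hx]; exact (curve_oval_param _ _ h hx).
Qed.

Lemma oval_curve_pos : oval (fun x y => curve a b x y /\ 0 < x).
Proof.
  exists oval_x, oval_y; split; [exact oval_continuous |].
  split; [exact oval_periodic | split; [exact oval_param_inj |]].
  intros x y; symmetry; apply oval_image_iff.
Qed.

End Oval.

Lemma oval_opp (C : R -> R -> Prop) : oval C -> oval (fun x y => C (- x) (- y)).
Proof.
  intros [fx [fy [Hcont [Hper [Hinj Himg]]]]].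
  exists (fun t => - fx t), (fun t => - fy t); split; [| split; [| split]].
  - intros t; destruct (Hcont t); split; apply continuity_pt_opp; assumption.
  - intros t; destruct (Hper t) as [-> ->]; split; reflexivity.
  - intros s t hs ht ex ey; apply Hinj; lra.
  - intros x y; rewrite Himg; split; intros [t [ex ey]]; exists t; lra.
Qed.

Theorem lemma5 (a b : R) (ha : 0 < a) (hb : 0 < b) :
  ((exists p : R * R, period2 b a p) <-> 0 < a * b < 1 / 16) /\
  (0 < a * b < 1 / 16 ->
     (forall x y : R, period2 b a (x, y) <-> V b a x y = - (a * b)) /\
     exists C1 C2 : R -> R -> Prop,
       oval C1 /\ oval C2 /\
       (forall x y, ~ (C1 x y /\ C2 x y)) /\
       (forall x y, V b a x y = - (a * b) <-> C1 x y \/ C2 x y)).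
Proof.
  assert (hab0 : 0 < a * b) by (apply Rmult_lt_0_compat; assumption).
  split; [split |].
  - intros [[x y] Hp]; apply period2_iff in Hp as [h Hnf]; [| exact ha | exact hb].
    exact (conj hab0 (curve_ab_lt _ _ _ _ ha hb h Hnf)).
  - intros [_ hab]; exists (oval_x a b 0, oval_y a b 0).
    apply period2_iff_curve; [exact ha | exact hb | lra | exact (oval_on_curve _ _ ha hb hab 0)].
  - intros [_ hab]; split.
    + intros x y; rewrite V_level_iff_curve; apply period2_iff_curve; lra.
    + pose proof (oval_curve_pos _ _ ha hb hab) as Hoval.
      exists (fun x y => curve a b x y /\ 0 < x),
             (fun x y => curve a b (- x) (- y) /\ 0 < - x).
      split; [exact Hoval | split; [exact (oval_opp _ Hoval) | split]].
      * intros x y [[_ hx] [_ hx']]; lra.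
      * intros x y; rewrite V_level_iff_curve, curve_opp; split; [| tauto].
        intros h; assert (hxy := curve_xy_pos _ _ _ _ ha hb h).
        assert (hx : x <> 0) by (intros ->; lra).
        destruct (Rtotal_order x 0) as [hneg | [? | hpos]]; [right | contradiction | left];
          split; (assumption || lra).
Qed.
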